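(* Let $A,B\in\mathbb{R}^{n\times n}$ be symmetric matrices and suppose $I_{\succeq}(A,B)\neq\emptyset$. If $I_{\succeq}(A,B)$ is a single-point set, then $B$ is indefinite and $I_{\succ}(A,B)=\emptyset$. Otherwise, $I_{\succeq}(A,B)$ is an interval and (a) $Q(A)\cap Q(B)=N(A)\cap N(B)$; (b) $N(A+\sigma B)=N(A)\cap N(B)$ for every $\sigma$ in the interior of $I_{\succeq}(A,B)$; (c) $A$ and $B$ are simultaneously diagonalizable via congruence.
   Context: For symmetric $A,B$: $I_{\succ}(A,B)=\{\sigma\in\mathbb{R}: A+\sigma B\succ 0\}$ (positive definite), $I_{\succeq}(A,B)=\{\sigma\in\mathbb{R}: A+\sigma B\succeq 0\}$ (positive semidefinite), $Q(A)=\{v\in\mathbb{R}^n: v^TAv=0\}$, $N(A)=\{v: Av=0\}$. $A$ and $B$ are simultaneously diagonalizable via congruence if there is a nonsingular matrix $C$ such that both $C^TAC$ and $C^TBC$ are diagonal. *)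

From HB Require Import structures.
From mathcomp Require Import all_boot all_order all_algebra.
From mathcomp Require Import reals.
Set Implicit Arguments. Unset Strict Implicit. Unset Printing Implicit Defensive.
Import Order.TTheory GRing.Theory Num.Theory.
Local Open Scope ring_scope.

Section Defs.
Variables (R : realType) (n : nat).

Definition qf (A : 'M[R]_n) (v : 'cV[R]_n) : R := (v^T *m A *m v) 0 0.

Definition psd (A : 'M[R]_n) : Prop := forall v : 'cV[R]_n, 0 <= qf A v.
Definition pd (A : 'M[R]_n) : Prop := forall v : 'cV[R]_n, v != 0 -> 0 < qf A v.

Definition indefinite (B : 'M[R]_n) : Prop := ~ psd B /\ ~ psd (- B).

Definition I_pd (A B : 'M[R]_n) (s : R) : Prop := pd (A + s *: B).
Definition I_psd (A B : 'M[R]_n) (s : R) : Prop := psd (A + s *: B).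

Definition Qset (A : 'M[R]_n) (v : 'cV[R]_n) : Prop := qf A v = 0.
Definition Nset (A : 'M[R]_n) (v : 'cV[R]_n) : Prop := A *m v = 0.

Definition simul_diag_congr (A B : 'M[R]_n) : Prop :=
  exists C : 'M[R]_n, C \in unitmx /\
    is_diag_mx (C^T *m A *m C) /\ is_diag_mx (C^T *m B *m C).
End Defs.

Definition is_interval (R : realType) (S : R -> Prop) : Prop :=
  forall x y z : R, S x -> S y -> x <= z -> z <= y -> S z.

Definition in_interior (R : realType) (S : R -> Prop) (s : R) : Prop :=
  exists2 e : R, 0 < e & forall t : R, `|t - s| < e -> S t.

Definition single_point (R : realType) (S : R -> Prop) : Prop :=
  exists s : R, forall t : R, S t <-> t = s.

(* Everything rests on one normal form: symmetric matrices M and B with M positive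
   semidefinite and N(M) contained in N(B) are simultaneously diagonalizable by congruence.
   By induction on the dimension, one splits off a vector v that is orthogonal for both forms
   to a hyperplane ker f with f v <> 0: a kernel vector of M when M is singular, and otherwise
   a generalized eigenvector B v = r M v, read off a real eigenvector of L^T B L where
   L^T M L = I.

   Given two distinct points s of I_psd(A,B), a vector of Q(A) and Q(B) is isotropic for the
   semidefinite matrices A + s B, so it lies in their kernels, hence in N(A) and N(B). At an
   interior point s the quadratic form of A + s B is squeezed between two nonnegative ones,
   which gives (b); so (A + s B, B) has the normal form above, and A = (A + s B) - s B is
   diagonalized by the same congruence. If I_psd(A,B) = {s}, then B is indefinite since s + 1
   or s - 1 would otherwise belong to it, and A + s B is not definite: diagonalizing it together
   with B shows that A + (s + t) B is semidefinite for small t > 0. *)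

From HB Require Import structures.
From mathcomp Require Import all_boot all_order all_algebra.
From mathcomp Require Import reals.
From mathcomp Require Import ring lra.
From mathcomp Require complex.
From Stdlib Require Import Classical.
Set Implicit Arguments. Unset Strict Implicit. Unset Printing Implicit Defensive.
Import Order.TTheory GRing.Theory Num.Theory.
Local Open Scope ring_scope.

Section FieldMatrices.
Variable F : fieldType.

Lemma nonunit_row_ker m (M : 'M[F]_m) : M \notin unitmx ->
  exists2 u : 'rV[F]_m, u != 0 & u *m M = 0.
Proof.
by rewrite -row_free_unit -kermx_eq0 => /rowV0Pn [u /sub_kermxP uM u0]; exists u.
Qed.

Lemma unitmx_ker0 m (M : 'M[F]_m) :
  (forall x : 'cV[F]_m, M *m x = 0 -> x = 0) -> M \in unitmx.
Proof.
move=> ker0; rewrite -unitmx_tr; apply: contraT => /nonunit_row_ker [u u0 uM].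
by rewrite -trmx_eq0 (ker0 u^T) ?eqxx // in u0; rewrite -[M]trmxK -trmx_mul uM trmx0.
Qed.

Lemma unitmx_mulmx_eq0 m (C : 'M[F]_m) (x : 'cV[F]_m) :
  C \in unitmx -> (C *m x == 0) = (x == 0).
Proof.
move=> CU; apply/eqP/eqP => [Cx | ->]; last exact: mulmx0.
by rewrite -(mulKmx CU x) Cx mulmx0.
Qed.

Lemma hyperplane_basis m (f : 'rV[F]_m.+1) : f != 0 ->
  exists U : 'M[F]_(m.+1, m), f *m U = 0 /\ forall y : 'cV[F]_m, U *m y = 0 -> y = 0.
Proof.
move=> f0; have [k fk] : exists k, f 0 k != 0.
  apply/existsP; apply: contraR f0 => /existsPn f0; apply/eqP/rowP => k.
  by rewrite mxE; apply/eqP/negPn/f0.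
pose U : 'M[F]_(m.+1, m) :=
  \matrix_(r, j) ((r == lift k j)%:R - f 0 (lift k j) / f 0 k * (r == k)%:R).
exists U; split.
  apply/rowP => j; rewrite !mxE (bigD1 k) //= (bigD1 (lift k j)) /=; last first.
    by rewrite eq_sym neq_lift.
  rewrite big1 => [|r /andP [rk rl]]; last first.
    by rewrite !mxE (negPf rk) (negPf rl) mulr0 subrr mulr0.
  rewrite !mxE !eqxx (negPf (neq_lift k j)) eq_sym (negPf (neq_lift k j)).
  by rewrite !mulr1 !mulr0 sub0r subr0 mulrN mulrCA mulfV // mulr1 addr0 addNr.
move=> y Uy; apply/colP => j; rewrite mxE.
have /colP /(_ (lift k j)) := Uy; rewrite !mxE (bigD1 j) //= big1 => [|r rj].
  by rewrite !mxE eqxx eq_sym (negPf (neq_lift k j)) mulr0 subr0 mul1r addr0.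
rewrite !mxE (inj_eq (@lift_inj _ k)) eq_sym (negPf rj).
by rewrite eq_sym (negPf (neq_lift k j)) mulr0 subrr mul0r.
Qed.

Lemma row_mx_unit m (v : 'cV[F]_m.+1) (U : 'M[F]_(m.+1, m)) (f : 'rV[F]_m.+1) :
  (f *m v) 0 0 != 0 -> f *m U = 0 -> (forall y : 'cV[F]_m, U *m y = 0 -> y = 0) ->
  (row_mx v U : 'M_(1 + m)) \in unitmx.
Proof.
move=> fv fU Uinj; apply: unitmx_ker0 => x; rewrite -[x]vsubmxK mul_row_col => vxU.
have x0 : usubmx x = 0.
  have /eqP := congr1 (mulmx f) vxU.
  rewrite mulmxDr !mulmxA fU mul0mx addr0 mulmx0 [f *m v]mx11_scalar mul_scalar_mx.
  by rewrite scaler_eq0 (negPf fv) => /eqP.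
by rewrite x0 mulmx0 add0r in vxU; rewrite x0 (Uinj _ vxU) col_mx0.
Qed.

Lemma row_mx_congr_block m (v : 'cV[F]_m.+1) (U : 'M[F]_(m.+1, m)) (X : 'M[F]_m.+1) :
  X^T = X -> v^T *m X *m U = 0 ->
  (row_mx v U)^T *m X *m row_mx v U = block_mx (v^T *m X *m v) 0 0 (U^T *m X *m U).
Proof.
move=> symX vXU; have UXv : U^T *m X *m v = (v^T *m X *m U)^T.
  by rewrite !trmx_mul trmxK symX mulmxA.
by rewrite tr_row_mx mul_col_mx mul_col_row UXv vXU trmx0.
Qed.

Lemma is_diag_block_congr m (a : 'M[F]_1) (Y C : 'M[F]_m) :
  is_diag_mx (C^T *m Y *m C) ->
  is_diag_mx ((block_mx 1%:M 0 0 C)^T *m block_mx a 0 0 Y *m block_mx 1%:M 0 0 C).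
Proof.
move=> dY; rewrite tr_block_mx !trmx0 trmx1 !mulmx_block.
rewrite !(mul0mx, mulmx0, mul1mx, mulmx1, addr0, add0r) is_diag_block_mx //= dY andbT.
by rewrite !eqxx; apply/is_diag_mxP => i j; rewrite !ord1 eqxx.
Qed.

Definition orth_split m (X Y : 'M[F]_m.+1) :=
  exists v : 'cV[F]_m.+1, exists2 f : 'rV[F]_m.+1, (f *m v) 0 0 != 0 &
    forall w : 'cV[F]_m.+1, f *m w = 0 -> v^T *m X *m w = 0 /\ v^T *m Y *m w = 0.

Section SplitInduction.
Variable P : forall m, 'M[F]_m -> 'M[F]_m -> Prop.
Hypothesis P_sym : forall m (X Y : 'M[F]_m), P X Y -> X^T = X /\ Y^T = Y.
Hypothesis P_congr : forall m k (X Y : 'M[F]_m) (U : 'M[F]_(m, k)),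
  P X Y -> P (U^T *m X *m U) (U^T *m Y *m U).
Hypothesis P_split : forall m (X Y : 'M[F]_m.+1), P X Y -> orth_split X Y.

(* Congruence by [row_mx v U], with U a basis of ker f, makes both forms block diagonal
   with a 1 x 1 block. *)
Lemma simul_diag_of_split n (X Y : 'M[F]_n) : P X Y ->
  exists C : 'M[F]_n, C \in unitmx /\
    is_diag_mx (C^T *m X *m C) /\ is_diag_mx (C^T *m Y *m C).
Proof.
elim: n X Y => [|m IH] X Y PXY.
  by exists 1%:M; split; [exact: unitmx1 | split; apply/is_diag_mxP => -[]].
have [symX symY] := P_sym PXY.
have [v [f fv orth]] := P_split PXY.
have f0 : f != 0 by apply: contraNneq fv => ->; rewrite mul0mx mxE.
have [U [fU Uinj]] := hyperplane_basis f0.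
have [C2 [C2U [dX dY]]] := IH _ _ (P_congr U PXY).
pose D : 'M[F]_(1 + m) := block_mx 1%:M 0 0 C2.
have diag (Z : 'M[F]_m.+1) : Z^T = Z ->
    (forall w : 'cV[F]_m.+1, f *m w = 0 -> v^T *m Z *m w = 0) ->
    is_diag_mx (C2^T *m (U^T *m Z *m U) *m C2) ->
    is_diag_mx ((row_mx v U *m D)^T *m Z *m (row_mx v U *m D)).
  move=> symZ Zw dZ; have vZU : v^T *m Z *m U = 0.
    apply/matrixP => i j; have fUj : f *m col j U = 0 by rewrite colE mulmxA fU mul0mx.
    by have /matrixP /(_ i 0) := Zw _ fUj; rewrite colE mulmxA -colE !mxE.
  have -> : (row_mx v U *m D)^T *m Z *m (row_mx v U *m D) =
      D^T *m ((row_mx v U)^T *m Z *m row_mx v U) *m D by rewrite trmx_mul !mulmxA.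
  by rewrite row_mx_congr_block // is_diag_block_congr.
exists (row_mx v U *m D); split.
  have detD : \det D = \det C2 by rewrite det_ublock det1 mul1r.
  by rewrite unitmx_mul (row_mx_unit fv fU Uinj) unitmxE detD -unitmxE.
by split; apply: diag => // w /orth [].
Qed.

End SplitInduction.
End FieldMatrices.

Section RealSpectrum.
Import complex.

Lemma symmetric_real_eigenvector (R : rcfType) m (S : 'M[R]_m.+1) : S^T = S ->
  exists r : R, exists2 v : 'cV[R]_m.+1, v != 0 & S *m v = r *: v.
Proof.
(* The complexification is Hermitian, so its spectral decomposition has real eigenvalues. *)
move=> symS; pose SC := map_mx (real_complex R) S.
have hermSC : SC \is hermsymmx.
  apply: realsym_hermsym; last first.
    by apply/mxOverP => i j; rewrite mxE; apply/complex_realP; eexists.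
  apply/is_hermitianmxP; rewrite expr0 scale1r map_mx_id //.
  by apply/matrixP => i j; rewrite !mxE -[in RHS]symS mxE.
set P := spectralmx SC; set d := spectral_diag SC.
have SCE : SC = invmx P *m diag_mx d *m P.
  exact/orthomx_spectralP/hermitian_normalmx.
have PU : P \in unitmx := spectral_unit SC.
have d_real : d 0 0 \is Num.real := mxOverP (hermitian_spectral_diag_real hermSC) 0 0.
have : eigenvalue SC (d 0 0).
  apply/eigenvalueP; exists (row 0 P).
    by rewrite SCE !mulmxA -row_mul mulmxV // row1 -rowE row_diag_mx -scalemxAl -rowE.
  apply/negP => /eqP P0; have /rowP /(_ 0) := congr1 (mulmx^~ (invmx P)) P0.
  by rewrite -row_mul mulmxV // row1 mul0mx !mxE eqxx => /eqP; rewrite oner_eq0.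
rewrite -(RRe_real d_real) eigenvalue_map => /eigenvalueP [u uS u0].
exists (Re (d 0 0)), u^T; first by rewrite trmx_eq0.
by rewrite -[S]symS -trmx_mul uS linearZ.
Qed.

End RealSpectrum.

Lemma is_diag_mx_addZ (V : pzRingType) m n (X Y : 'M[V]_(m, n)) a :
  is_diag_mx X -> is_diag_mx Y -> is_diag_mx (X + a *: Y).
Proof.
move=> /is_diag_mxP dX /is_diag_mxP dY; apply/is_diag_mxP => i j ij.
by rewrite !mxE dX // dY // mulr0 addr0.
Qed.

Lemma symmetric_congr (V : comPzRingType) m k (M : 'M[V]_m) (C : 'M[V]_(m, k)) :
  M^T = M -> (C^T *m M *m C)^T = C^T *m M *m C.
Proof. by move=> symM; rewrite !trmx_mul trmxK symM mulmxA. Qed.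

Lemma tr_mulmx_self_eq0 (V : realDomainType) n (x : 'cV[V]_n) :
  ((x^T *m x) 0 0 == 0) = (x == 0).
Proof.
have -> : (x^T *m x) 0 0 = \sum_i x i 0 ^+ 2.
  by rewrite mxE; apply: eq_bigr => i _; rewrite mxE expr2.
apply/eqP/eqP => [/psumr_eq0P x0|->]; last by rewrite big1 // => i _; rewrite mxE expr0n.
apply/colP => i; rewrite mxE; apply/eqP; rewrite -sqrf_eq0.
by apply/eqP/x0 => // j _; rewrite sqr_ge0.
Qed.

Section QuadraticForms.
Variable R : realType.
Implicit Types (n m : nat).

Lemma qf_congr n m (C : 'M[R]_(n, m)) (M : 'M[R]_n) w :
  qf (C^T *m M *m C) w = qf M (C *m w).
Proof. by rewrite /qf trmx_mul !mulmxA. Qed.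

Lemma qf_pencil n (A B : 'M[R]_n) s v : qf (A + s *: B) v = qf A v + s * qf B v.
Proof. by rewrite /qf mulmxDr mulmxDl -scalemxAr -scalemxAl !mxE. Qed.

Lemma psdD n (X Y : 'M[R]_n) : psd X -> psd Y -> psd (X + Y).
Proof. by move=> psdX psdY v; rewrite -[Y]scale1r qf_pencil mul1r addr_ge0. Qed.

Lemma qf_ker n (M : 'M[R]_n) v : M *m v = 0 -> qf M v = 0.
Proof. by move=> Mv; rewrite /qf -mulmxA Mv mulmx0 mxE. Qed.

Lemma qf_delta n (M : 'M[R]_n) i : qf M (delta_mx i 0) = M i i.
Proof. by rewrite /qf trmx_delta -colE -rowE !mxE. Qed.

Lemma qf_diag n (D : 'M[R]_n) w : is_diag_mx D ->
  qf D w = \sum_i D i i * w i 0 ^+ 2.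
Proof.
move=> /is_diag_mxP dD; rewrite /qf mxE; apply: eq_bigr => j _.
rewrite mxE (bigD1 j) //= big1 ?addr0 => [|i ij]; last by rewrite dD ?mulr0.
by rewrite mxE expr2; ring.
Qed.

Lemma qf_addZ_sym n (M : 'M[R]_n) u w t : M^T = M ->
  qf M (u + t *: w) = qf M u + 2 * t * (u^T *m M *m w) 0 0 + t ^+ 2 * qf M w.
Proof.
move=> symM; have wMu : (w^T *m M *m u) 0 0 = (u^T *m M *m w) 0 0.
  have -> : w^T *m M *m u = (u^T *m M *m w)^T by rewrite !trmx_mul trmxK symM mulmxA.
  by rewrite mxE.
rewrite /qf; have -> : (u + t *: w)^T = u^T + t *: w^T by rewrite linearD linearZ.
rewrite !mulmxDl !mulmxDr -!scalemxAl -!scalemxAr.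
move: wMu; set a := u^T *m M *m u; set b := u^T *m M *m w.
set b' := w^T *m M *m u; set c := w^T *m M *m w.
by clearbody a b b' c; rewrite !mxE => ->; ring.
Qed.

Lemma quadratic_ge0_linear0 (b c : R) : (forall t, 0 <= 2 * t * b + t ^+ 2 * c) -> b = 0.
Proof.
move=> ge0; pose k := `|c| + 1.
have k0 : 0 < k by rewrite /k; have := normr_ge0 c; lra.
have [t tk] : exists t, t * k = - b by exists (- b / k); rewrite mulfVK // gt_eqF.
have : 0 <= - b ^+ 2 * (2 * k - c).
  have -> : - b ^+ 2 * (2 * k - c) = k ^+ 2 * (2 * t * b + t ^+ 2 * c).
    by rewrite -[b]opprK -tk; ring.
  by rewrite mulr_ge0 ?sqr_ge0.
have p0 : 0 < 2 * k - c by have := ler_norm c; have := normr_ge0 c; rewrite /k; lra.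
rewrite pmulr_lge0 // oppr_ge0 => b2.
by apply/eqP; rewrite -sqrf_eq0 eq_le b2 sqr_ge0.
Qed.

Lemma psd_ker n (M : 'M[R]_n) v : M^T = M -> psd M -> qf M v = 0 -> M *m v = 0.
Proof.
move=> symM psdM qv; apply/eqP; rewrite -tr_mulmx_self_eq0; apply/eqP.
apply: (@quadratic_ge0_linear0 _ (qf M (M *m v))) => t.
have := psdM (v + t *: (M *m v)); rewrite qf_addZ_sym // qv add0r.
by have -> : v^T *m M *m (M *m v) = (M *m v)^T *m (M *m v) by rewrite trmx_mul symM.
Qed.

Lemma pd_psd n (M : 'M[R]_n) : pd M -> psd M.
Proof.
move=> pdM v; have [->|v0] := eqVneq v 0; last exact/ltW/pdM.
by rewrite qf_ker ?mulmx0.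
Qed.

Lemma psd_unit_pd n (M : 'M[R]_n) : M^T = M -> psd M -> M \in unitmx -> pd M.
Proof.
move=> symM psdM MU v v0; rewrite lt0r psdM andbT; apply: contra v0 => /eqP qv.
by rewrite -(unitmx_mulmx_eq0 _ MU) (psd_ker symM psdM qv).
Qed.

Lemma pd_congr_diag_gt0 n (M C : 'M[R]_n) i : pd M -> C \in unitmx ->
  0 < (C^T *m M *m C) i i.
Proof.
move=> pdM CU; rewrite -qf_delta qf_congr pdM // unitmx_mulmx_eq0 //.
by apply/negP => /eqP /matrixP /(_ i 0); rewrite !mxE !eqxx => /eqP; rewrite oner_eq0.
Qed.

Lemma psd_congr n (M C : 'M[R]_n) : C \in unitmx -> psd (C^T *m M *m C) -> psd M.
Proof. by move=> CU psdC v; rewrite -(mulKVmx CU v) -qf_congr. Qed.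

Lemma psd_diag n (D : 'M[R]_n) : is_diag_mx D -> (forall i, 0 <= D i i) -> psd D.
Proof.
by move=> dD D0 v; rewrite qf_diag // sumr_ge0 // => i _; rewrite mulr_ge0 ?sqr_ge0.
Qed.

Lemma symmetric_congr_diag n (M : 'M[R]_n) : M^T = M ->
  exists C : 'M[R]_n, C \in unitmx /\ is_diag_mx (C^T *m M *m C).
Proof.
(* The case Y = 0 of the split induction, split off by eigenvectors. *)
move=> symM; pose P m (X Y : 'M[R]_m) := X^T = X /\ Y = 0.
have P_sym m (X Y : 'M[R]_m) : P m X Y -> X^T = X /\ Y^T = Y.
  by case=> -> ->; rewrite trmx0.
have P_congr m k (X Y : 'M[R]_m) (U : 'M[R]_(m, k)) :
    P m X Y -> P k (U^T *m X *m U) (U^T *m Y *m U).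
  by case=> symX ->; rewrite mulmx0 mul0mx; split => //; exact: symmetric_congr.
have P_split m (X Y : 'M[R]_m.+1) : P _ X Y -> orth_split X Y.
  case=> symX ->; have [r [v v0 Xv]] := symmetric_real_eigenvector symX.
  exists v, v^T; first by rewrite tr_mulmx_self_eq0.
  move=> w vw; rewrite !mulmx0 mul0mx; split => //.
  by rewrite -[X]symX -trmx_mul Xv linearZ /= -scalemxAl vw scaler0.
have [C [CU [dC _]]] := simul_diag_of_split P_sym P_congr P_split (conj symM erefl).
by exists C.
Qed.

Lemma pd_congr_id n (M : 'M[R]_n) : M^T = M -> pd M ->
  exists L : 'M[R]_n, L \in unitmx /\ L^T *m M *m L = 1%:M.
Proof.
move=> symM pdM; have [C [CU dC]] := symmetric_congr_diag symM.
have Dpos i : 0 < (C^T *m M *m C) i i := pd_congr_diag_gt0 i pdM CU.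
set D := C^T *m M *m C in dC Dpos.
pose e := \row_i (Num.sqrt (D i i))^-1.
exists (C *m diag_mx e); split.
  rewrite unitmx_mul CU unitmxE det_diag unitfE; apply/prodf_neq0 => i _.
  by rewrite mxE invr_eq0 sqrtr_eq0 -ltNge.
have -> : (C *m diag_mx e)^T *m M *m (C *m diag_mx e) = diag_mx e *m D *m diag_mx e.
  by rewrite trmx_mul tr_diag_mx !mulmxA.
move/is_diag_mxP: dC; clearbody D => dD.
rewrite mul_diag_mx mul_mx_diag; apply/matrixP => i j; rewrite !mxE.
have [<-|ij] := eqVneq i j; last by rewrite (dD i j ij) mulr0 mul0r.
by rewrite mulrC mulrA -expr2 exprVn sqr_sqrtr ?ltW // mulVf // gt_eqF.
Qed.

Definition psd_pair n (M B : 'M[R]_n) :=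
  [/\ M^T = M, B^T = B, psd M & forall v : 'cV[R]_n, M *m v = 0 -> B *m v = 0].

Lemma psd_pair_congr m k (X Y : 'M[R]_m) (U : 'M[R]_(m, k)) :
  psd_pair X Y -> psd_pair (U^T *m X *m U) (U^T *m Y *m U).
Proof.
case=> symX symY psdX kerXY; split; try exact: symmetric_congr.
  by move=> x; rewrite qf_congr.
move=> x /qf_ker; rewrite qf_congr => /(psd_ker symX psdX) /kerXY Yx.
by rewrite -!mulmxA Yx mulmx0.
Qed.

Lemma psd_pair_split m (X Y : 'M[R]_m.+1) : psd_pair X Y -> orth_split X Y.
Proof.
case=> symX symY psdX kerXY.
have [XU | /nonunit_row_ker [u u0 uX]] := boolP (X \in unitmx).
  have [L [LU LXL]] := pd_congr_id symX (psd_unit_pd symX psdX XU).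
  have [r [w w0 Yw]] := symmetric_real_eigenvector (symmetric_congr L symY).
  pose v := L *m w.
  have Yv : Y *m v = r *: (X *m v).
    have LTU : L^T \in unitmx by rewrite unitmx_tr.
    apply: (can_inj (mulKmx LTU)).
    by rewrite -scalemxAr /v !mulmxA Yw LXL mul1mx.
  exists v, (X *m v)^T.
    by rewrite trmx_mul symX lt0r_neq0 // psd_unit_pd // unitmx_mulmx_eq0.
  move=> w' Xvw; rewrite -[X]symX -[Y]symY -!trmx_mul Xvw Yv.
  by rewrite linearZ /= -scalemxAl Xvw scaler0.
have Xu : X *m u^T = 0 by rewrite -[X]symX -trmx_mul uX trmx0.
exists u^T, u; first by rewrite -{1}[u]trmxK tr_mulmx_self_eq0 trmx_eq0.
move=> w _; rewrite trmxK uX mul0mx; split => //.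
by rewrite -[u]trmxK -[Y]symY -trmx_mul (kerXY _ Xu) trmx0 mul0mx.
Qed.

Lemma psd_pair_simul_diag n (M B : 'M[R]_n) : psd_pair M B -> simul_diag_congr M B.
Proof.
have psd_pair_sym m (X Y : 'M[R]_m) : psd_pair X Y -> X^T = X /\ Y^T = Y by case.
exact: (simul_diag_of_split psd_pair_sym psd_pair_congr psd_pair_split).
Qed.

Lemma pd_psd_perturb n (M N : 'M[R]_n) : M^T = M -> N^T = N -> pd M ->
  exists2 t : R, 0 < t & psd (M + t *: N).
Proof.
move=> symM symN pdM; have pMN : psd_pair M N.
  split=> // [|v Mv]; first exact: pd_psd.
  have /eqP -> : v == 0 by apply: contraT => /pdM; rewrite qf_ker // ltxx.
  exact: mulmx0.
have [C [CU [dD dE]]] := psd_pair_simul_diag pMN.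
set D := C^T *m M *m C in dD; set E := C^T *m N *m C in dE.
have Dpos i : 0 < D i i := pd_congr_diag_gt0 i pdM CU.
pose S := \sum_i `|E i i| / D i i.
have S0 : 0 <= S by rewrite sumr_ge0 // => i _; rewrite divr_ge0 // ltW.
(* t = (1 + S)^-1 ensures t |E i i| <= D i i for every i. *)
exists (1 + S)^-1; first by rewrite invr_gt0; lra.
apply: (psd_congr CU); rewrite mulmxDr mulmxDl -scalemxAr -scalemxAl -/D -/E.
apply: psd_diag => [|i]; first exact: is_diag_mx_addZ.
have ES : `|E i i| <= S * D i i.
  rewrite -ler_pdivrMr // /S (bigD1 i) //= lerDl.
  by rewrite sumr_ge0 // => j _; rewrite divr_ge0 // ltW.
have -> : (D + (1 + S)^-1 *: E) i i = (1 + S)^-1 * ((1 + S) * D i i + E i i).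
  by rewrite !mxE; field; rewrite lt0r_neq0 //; lra.
have := ler_norm (- E i i); rewrite normrN => NE.
have := Dpos i => Di; apply: mulr_ge0; [rewrite invr_ge0 | ]; lra.
Qed.

End QuadraticForms.

Section RealSets.
Variable R : realType.
Implicit Types (S : R -> Prop) (s : R).

Lemma not_single_point_lt S : (exists s, S s) -> ~ single_point S ->
  exists s1 s2, [/\ S s1, S s2 & s1 < s2].
Proof.
move=> [s Ss] nsp; have [t [St ts]] : exists t, S t /\ t != s.
  apply: NNPP => no_t; apply: nsp; exists s => t; split => [St | -> //].
  by apply/eqP/negPn/negP => ts; apply: no_t; exists t.
by case: (ltgtP t s) ts => // ts _; [exists t, s | exists s, t].
Qed.

Lemma interval_mid_interior S s1 s2 : is_interval S -> S s1 -> S s2 -> s1 < s2 ->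
  in_interior S ((s1 + s2) / 2).
Proof.
move=> intS S1 S2 s12; exists ((s2 - s1) / 2) => [|t]; first lra.
by rewrite ltr_norml => /andP [? ?]; apply: (intS s1 s2) => //; lra.
Qed.

Lemma in_interior_around S s : in_interior S s ->
  exists2 e, 0 < e & S (s - e) /\ S (s + e).
Proof.
case=> e e0 Se; exists (e / 2); first lra.
by split; apply: Se; rewrite ?opprD addrAC subrr add0r ?normrN ger0_norm; lra.
Qed.

End RealSets.

Section Pencil.
Variables (R : realType) (n : nat) (A B : 'M[R]_n).
Implicit Types (s : R) (v : 'cV[R]_n).

Lemma I_psd_interval : is_interval (I_psd A B).
Proof.
move=> x y z Ix Iy xz zy v; have := Ix v; have := Iy v; rewrite !qf_pencil => hy hx.
have [Bv0 | Bv0] := lerP 0 (qf B v).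
  have : 0 <= (z - x) * qf B v by rewrite mulr_ge0 // subr_ge0.
  nra.
have : 0 <= (y - z) * - qf B v by rewrite mulr_ge0 // ?subr_ge0 // oppr_ge0 ltW.
nra.
Qed.

Lemma single_point_indefinite : single_point (I_psd A B) -> indefinite B.
Proof.
case=> s0 Is0; have I0 : I_psd A B s0 by apply/Is0.
split=> [psdB | psdNB].
  have /Is0 : I_psd A B (s0 + 1) by rewrite /I_psd scalerDl scale1r addrA; exact: psdD.
  lra.
have /Is0 : I_psd A B (s0 - 1) by rewrite /I_psd scalerBl scale1r addrA; exact: psdD.
lra.
Qed.

Lemma interior_pencil_ker_Qset s v : in_interior (I_psd A B) s ->
  Nset (A + s *: B) v -> Qset A v /\ Qset B v.
Proof.
move=> /in_interior_around [e e0 [Im Ip]] /qf_ker; rewrite qf_pencil => q0.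
have := Im v; have := Ip v; rewrite !qf_pencil => hp hm.
have qB : qf B v = 0 by nra.
by split; rewrite /Qset // -q0 qB mulr0 addr0.
Qed.

Hypotheses (symA : A^T = A) (symB : B^T = B).

Lemma symmetric_pencil s : (A + s *: B)^T = A + s *: B.
Proof. by rewrite linearD linearZ /= symA symB. Qed.

Lemma Qset_Nset_two_points s1 s2 : I_psd A B s1 -> I_psd A B s2 -> s1 != s2 ->
  forall v, (Qset A v /\ Qset B v) <-> (Nset A v /\ Nset B v).
Proof.
move=> I1 I2 s12 v; split=> [[qA qB] | [NA NB]]; last by split; exact: qf_ker.
have ker s : I_psd A B s -> (A + s *: B) *m v = 0.
  move=> Is; apply: psd_ker => //; first exact: symmetric_pencil.
  by rewrite qf_pencil qA qB mulr0 addr0.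
have NB : B *m v = 0.
  have : (A + s2 *: B) *m v - (A + s1 *: B) *m v = (s2 - s1) *: (B *m v).
    by rewrite !mulmxDl -!scalemxAl scalerBl opprD addrACA subrr add0r.
  rewrite (ker _ I1) (ker _ I2) subrr => /esym/eqP.
  by rewrite scaler_eq0 subr_eq0 eq_sym (negPf s12) => /eqP.
by split=> //; have := ker _ I1; rewrite mulmxDl -scalemxAl NB scaler0 addr0.
Qed.

Lemma single_point_not_pd : single_point (I_psd A B) -> forall s, ~ I_pd A B s.
Proof.
move=> [s0 Is0] s pds; have [t t0 psdt] := pd_psd_perturb (symmetric_pencil s) symB pds.
have /Is0 : I_psd A B s := pd_psd pds.
have /Is0 : I_psd A B (s + t) by rewrite /I_psd scalerDl addrA.
lra.
Qed.

Lemma interior_pencil_ker s : in_interior (I_psd A B) s ->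
  forall v, Nset (A + s *: B) v <-> Nset A v /\ Nset B v.
Proof.
move=> int_s v; split=> [Nv | [NA NB]].
  have [e e0 [Im Ip]] := in_interior_around int_s.
  have ne : s - e != s + e by rewrite lt_eqF //; lra.
  exact/(Qset_Nset_two_points Im Ip ne)/(interior_pencil_ker_Qset int_s).
by rewrite /Nset mulmxDl -scalemxAl NA NB scaler0 addr0.
Qed.

Lemma interior_simul_diag s : in_interior (I_psd A B) s -> simul_diag_congr A B.
Proof.
move=> int_s; have Is : I_psd A B s by case: int_s => e e0; apply; rewrite subrr normr0.
have [C [CU [dD dE]]] : simul_diag_congr (A + s *: B) B.
  apply: psd_pair_simul_diag; split=> // [|v /(interior_pencil_ker int_s) []//].
  exact: symmetric_pencil.
exists C; split=> //; split=> //.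
have -> : C^T *m A *m C = C^T *m (A + s *: B) *m C + (- s) *: (C^T *m B *m C).
  by rewrite mulmxDr mulmxDl -scalemxAr -scalemxAl scaleNr addrK.
exact: is_diag_mx_addZ.
Qed.

End Pencil.

Theorem theorem3 (R : realType) (n : nat) (A B : 'M[R]_n)
  (symA : A^T = A) (symB : B^T = B)
  (hne : exists s : R, I_psd A B s) :
  (single_point (I_psd A B) ->
     indefinite B /\ (forall s : R, ~ I_pd A B s)) /\
  (~ single_point (I_psd A B) ->
     is_interval (I_psd A B) /\
     (forall v : 'cV[R]_n, (Qset A v /\ Qset B v) <-> (Nset A v /\ Nset B v)) /\
     (forall s : R, in_interior (I_psd A B) s ->
        forall v : 'cV[R]_n, Nset (A + s *: B) v <-> (Nset A v /\ Nset B v)) /\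
     simul_diag_congr A B).
Proof.
split=> [sp | nsp].
  by split; [exact: single_point_indefinite sp | exact: single_point_not_pd sp].
have [s1 [s2 [I1 I2 s12]]] := not_single_point_lt hne nsp.
split; first exact: I_psd_interval.
split; first by apply: (Qset_Nset_two_points symA symB I1 I2); rewrite lt_eqF.
split; first exact: interior_pencil_ker.
exact: interior_simul_diag (interval_mid_interior (@I_psd_interval _ _ A B) I1 I2 s12).
Qed.
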